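(* Let $K_1,K_2$ be non-trivial $\mathcal R$-dioids. Then for all $a,a'\in K_1$ and $b,b'\in K_2$: (i) if $a\otimes b=0$ in $K_1\otimes_{\mathcal R}K_2$, then $a=0$ in $K_1$ or $b=0$ in $K_2$; (ii) if $0\ne a\otimes b\le a'\otimes b'$ in $K_1\otimes_{\mathcal R}K_2$, then $0\ne a\le a'$ in $K_1$ and $0\ne b\le b'$ in $K_2$.
   Context: An $\mathcal R$-dioid is a dioid in which every regular subset of its multiplicative monoid has a supremum $\sum A$ with $\sum(AB)=(\sum A)(\sum B)$ (equivalently a $*$-continuous Kleene algebra); non-trivial means $0\ne1$; $\le$ is the natural order $x\le y$ iff $x+y=y$. The tensor product $K_1\otimes_{\mathcal R}K_2$ is the $\mathcal R$-dioid with $\mathcal R$-morphisms (dioid morphisms preserving suprema of regular sets) $\top_1,\top_2$ from $K_1,K_2$ with elementwise commuting images, universal among such pairs; concretely $\mathcal R(K_1\times K_2)/{\equiv}$, where $\equiv$ is the least $\mathcal R$-congruence identifying $A\times B$ with $\{(\sum A,\sum B)\}$ for regular $A\subseteq K_1,B\subseteq K_2$ (an $\mathcal R$-congruence being a semiring congruence such that regular sets with equal downward closures modulo it have congruent suprema). We write $a\otimes b=\top_1(a)\top_2(b)$, the class of $\{(a,b)\}$. *)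

From HB Require Import structures.
From mathcomp Require Import all_boot all_algebra.
Set Implicit Arguments. Unset Strict Implicit. Unset Printing Implicit Defensive.
Import GRing.Theory.
Local Open Scope ring_scope.

(* A dioid: a (not necessarily commutative) semiring with idempotent addition. *)
Definition idem_add (K : pzSemiRingType) := forall x : K, x + x = x.

Definition dle (K : pzSemiRingType) (x y : K) : Prop := x + y = y.

Inductive rexp (T : Type) : Type :=
| RZero | REps | RAtom of T | RPlus of rexp T & rexp T
| RDot of rexp T & rexp T | RStar of rexp T.
Arguments RZero {T}. Arguments REps {T}.

Inductive lang (K : pzSemiRingType) : rexp K -> K -> Prop :=
| lang_eps : lang REps 1
| lang_atom a : lang (RAtom a) a
| lang_plusl e1 e2 x : lang e1 x -> lang (RPlus e1 e2) x
| lang_plusr e1 e2 x : lang e2 x -> lang (RPlus e1 e2) x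
| lang_dot e1 e2 x y : lang e1 x -> lang e2 y -> lang (RDot e1 e2) (x * y)
| lang_star_nil e : lang (RStar e) 1
| lang_star_cons e x y : lang e x -> lang (RStar e) y -> lang (RStar e) (x * y).

Definition regular (K : pzSemiRingType) (A : K -> Prop) : Prop :=
  exists e : rexp K, forall x, A x <-> lang e x.

Definition setmul (K : pzSemiRingType) (A B : K -> Prop) : K -> Prop :=
  fun x => exists a b, [/\ A a, B b & x = a * b].

Definition setimg (K L : Type) (f : K -> L) (A : K -> Prop) : L -> Prop :=
  fun y => exists2 x, A x & y = f x.

Definition is_sup (K : pzSemiRingType) (A : K -> Prop) (s : K) : Prop :=
  (forall x, A x -> dle x s) /\
  (forall u, (forall x, A x -> dle x u) -> dle s u).

Definition Rdioid (K : pzSemiRingType) : Prop :=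
  [/\ idem_add K,
      (forall A : K -> Prop, regular A -> exists s, is_sup A s) &
      (forall (A B : K -> Prop) sA sB, regular A -> regular B ->
         is_sup A sA -> is_sup B sB -> is_sup (setmul A B) (sA * sB))].

Definition dioid_morph (K L : pzSemiRingType) (f : K -> L) : Prop :=
  [/\ f 0 = 0, f 1 = 1, (forall x y, f (x + y) = f x + f y) &
      (forall x y, f (x * y) = f x * f y)].

Definition Rmorph (K L : pzSemiRingType) (f : K -> L) : Prop :=
  dioid_morph f /\
  (forall (A : K -> Prop) s, regular A -> is_sup A s -> is_sup (setimg f A) (f s)).

Definition commuting_images (K1 K2 L : pzSemiRingType)
  (f1 : K1 -> L) (f2 : K2 -> L) : Prop :=
  forall x y, f1 x * f2 y = f2 y * f1 x.

Definition is_Rtensor (K1 K2 T : pzSemiRingType) (t1 : K1 -> T) (t2 : K2 -> T)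
  : Prop :=
  [/\ Rdioid T, Rmorph t1, Rmorph t2, commuting_images t1 t2 &
      forall (S : pzSemiRingType) (f1 : K1 -> S) (f2 : K2 -> S),
        Rdioid S -> Rmorph f1 -> Rmorph f2 -> commuting_images f1 f2 ->
        exists h : T -> S,
          [/\ Rmorph h, (forall x, h (t1 x) = f1 x), (forall y, h (t2 y) = f2 y) &
              forall h' : T -> S, Rmorph h' -> (forall x, h' (t1 x) = f1 x) ->
                 (forall y, h' (t2 y) = f2 y) -> forall z, h' z = h z]].

From HB Require Import structures.
From mathcomp Require Import all_boot all_algebra.
From mathcomp Require Import boolp classical_sets.
Set Implicit Arguments. Unset Strict Implicit. Unset Printing Implicit Defensive.
Import GRing.Theory.
Local Open Scope classical_set_scope.
Local Open Scope ring_scope.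

(* Call a subset of K1 * K2 closed when it is downward closed and, with one
   coordinate fixed, closed under sums and under suprema of regular sets in the
   other coordinate.  The join-preserving endomorphisms of the complete lattice of
   closed sets form an R-dioid, and multiplying the first (resp. second)
   coordinate on the left by a (resp. b) yields commuting R-morphisms from K1 and
   K2 into it.  By universality a (x) b acts as the map sending {(1, 1)} to the
   closure of {(a, b)}.  Hence a (x) b = 0, or a (x) b <= a' (x) b', puts (a, b)
   in the closure of {(0, 0)}, resp. {(a', b')}; and that closure lies in the
   closed set of pairs (x, y) with x = 0, y = 0, or x <= a' and y <= b'. *)

Section DioidOrder.
Variable K : pzSemiRingType.
Implicit Types x y z : K.

Lemma dle0x x : dle 0 x.
Proof. by rewrite /dle add0r. Qed.

Lemma dlex0 x : dle x 0 -> x = 0.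
Proof. by rewrite /dle addr0. Qed.

Lemma dle_trans x y z : dle x y -> dle y z -> dle x z.
Proof. by rewrite /dle => xy <-; rewrite addrA xy. Qed.

Lemma dle_addl (idem : idem_add K) x y : dle x (x + y).
Proof. by rewrite /dle addrA idem. Qed.

Lemma dle_addr (idem : idem_add K) x y : dle y (x + y).
Proof. by rewrite addrC; apply: dle_addl. Qed.

Lemma dle_add x y z : dle x z -> dle y z -> dle (x + y) z.
Proof. by rewrite /dle -addrA => xz ->. Qed.

Lemma dle_mull x y z : dle y z -> dle (x * y) (x * z).
Proof. by rewrite /dle -mulrDr => ->. Qed.

Lemma dle_mulr x y z : dle y z -> dle (y * x) (z * x).
Proof. by rewrite /dle -mulrDl => ->. Qed.

Lemma dle_anti x y : dle x y -> dle y x -> x = y.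
Proof. by rewrite /dle => xy yx; rewrite -xy -{1}yx addrC. Qed.

Lemma is_sup_eq0_or_dle (A : set K) s (Q : Prop) u :
  is_sup A s -> (forall x, A x -> x = 0 \/ Q /\ dle x u) -> s = 0 \/ Q /\ dle s u.
Proof.
move=> [_ leS] AQ; have [q | nq] := pselect Q.
  by right; split=> //; apply: leS => x /AQ [-> | [_ //]]; apply: dle0x.
by left; apply/dlex0/leS => x /AQ [-> | [//]]; apply: dle0x.
Qed.

End DioidOrder.

Section RegularSups.
Variable K : pzSemiRingType.

Lemma regular1 (a : K) : regular [set a].
Proof. by exists (RAtom a) => x; split=> [-> | ax]; [constructor | inversion ax]. Qed.

Lemma regular0 : regular (@set0 K).
Proof. by exists RZero => x; split=> // x0; inversion x0. Qed.

Lemma regular_setmul (A B : set K) : regular A -> regular B -> regular (setmul A B).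
Proof.
move=> [eA HA] [eB HB]; exists (RDot eA eB) => x; split.
  by move=> [a [b [/HA Aa /HB Bb ->]]]; constructor.
by move=> x_e; inversion x_e; subst; exists x0, y; split; [apply/HA | apply/HB |].
Qed.

Lemma is_sup1 (idem : idem_add K) (a : K) : is_sup [set a] a.
Proof. by split=> [x -> | u]; [apply: idem | apply]. Qed.

Lemma is_sup0 : is_sup (@set0 K) 0.
Proof. by split=> // u _; apply: dle0x. Qed.

Hypothesis RK : Rdioid K.

Lemma Rdioid_idem : idem_add K.
Proof. by case: RK. Qed.

Lemma is_sup_mull (a : K) (A : set K) s : regular A -> is_sup A s ->
  is_sup (setmul [set a] A) (a * s).
Proof.
by case: RK => idem _ supM rA sA; apply: supM => //; [apply: regular1 | apply: is_sup1].
Qed.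

Lemma is_sup_mulr (a : K) (A : set K) s : regular A -> is_sup A s ->
  is_sup (setmul A [set a]) (s * a).
Proof.
by case: RK => idem _ supM rA sA; apply: supM => //; [apply: regular1 | apply: is_sup1].
Qed.

End RegularSups.

Section Closure.
Variables K1 K2 : pzSemiRingType.
Local Notation P := (K1 * K2)%type.
Implicit Types (C X Y : set P).

Record closed C : Prop := Closed {
  closed_down x y x' y' : C (x, y) -> dle x' x -> dle y' y -> C (x', y');
  closed_add1 x x' y : C (x, y) -> C (x', y) -> C (x + x', y);
  closed_add2 x y y' : C (x, y) -> C (x, y') -> C (x, y + y');
  closed_sup1 (A : set K1) s y : regular A -> is_sup A s ->
    (forall x, A x -> C (x, y)) -> C (s, y);
  closed_sup2 (A : set K2) s x : regular A -> is_sup A s ->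
    (forall y, A y -> C (x, y)) -> C (x, s) }.

Definition cl X : set P := fun p => forall C, closed C -> X `<=` C -> C p.

Lemma cl_closed X : closed (cl X).
Proof.
split=> [x y x' y' Cxy xx' yy' | x x' y Cxy Cx'y | x y y' Cxy Cxy'
        | A s y rA sA CA | A s x rA sA CA] C HC XC.
- exact: (closed_down HC (Cxy C HC XC) xx' yy').
- exact: (closed_add1 HC (Cxy C HC XC) (Cx'y C HC XC)).
- exact: (closed_add2 HC (Cxy C HC XC) (Cxy' C HC XC)).
- by apply: (closed_sup1 HC rA sA) => x Ax; apply: CA.
- by apply: (closed_sup2 HC rA sA) => y Ay; apply: CA.
Qed.

Lemma sub_cl X : X `<=` cl X.
Proof. by move=> p Xp C _; apply. Qed.

Lemma cl_sub_closed X C : closed C -> X `<=` C -> cl X `<=` C.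
Proof. by move=> HC XC p; apply. Qed.

Lemma cl_sub X Y : X `<=` cl Y -> cl X `<=` cl Y.
Proof. exact: cl_sub_closed (cl_closed Y). Qed.

Lemma closed_clE C : closed C -> cl C = C.
Proof. by move=> HC; apply/seteqP; split; [apply: cl_sub_closed | apply: sub_cl]. Qed.

Lemma cl_id X : cl (cl X) = cl X.
Proof. exact: closed_clE (cl_closed X). Qed.

Lemma cl_eq X Y : X `<=` cl Y -> Y `<=` cl X -> cl X = cl Y.
Proof. by move=> XY YX; apply/seteqP; split; apply: cl_sub. Qed.

Lemma cl_mono X Y : X `<=` Y -> cl X `<=` cl Y.
Proof. by move=> XY; apply: cl_sub => p /XY; apply: sub_cl. Qed.

Lemma cl_0x X y : cl X (0, y).
Proof. by move=> C HC _; apply: (closed_sup1 HC (regular0 K1) (is_sup0 K1)). Qed.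

Lemma cl_x0 X x : cl X (x, 0).
Proof. by move=> C HC _; apply: (closed_sup2 HC (regular0 K2) (is_sup0 K2)). Qed.

End Closure.

(* A clmap encodes a join-preserving endomorphism of the lattice of closed sets
   as a map on all subsets that factors through [cl]. *)
Section ClosedMaps.
Variables K1 K2 : pzSemiRingType.
Local Notation P := (K1 * K2)%type.
Implicit Types (X Y : set P).

Record clmap := Clmap {
  clmap_fun :> set P -> set P;
  clmap_bigcup X : clmap_fun X = cl (\bigcup_(q in X) clmap_fun [set q]);
  clmap_cl X : clmap_fun (cl X) = clmap_fun X }.

Implicit Types F G H : clmap.

Lemma clmap_ext F G : (forall X, F X = G X) -> F = G.
Proof.
case: F G => f f1 f2 [g g1 g2] /= fg.
have fgE : f = g by apply: funext.
by subst g; congr Clmap; apply: Prop_irrelevance.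
Qed.

Lemma clmap_closed F X : closed (F X).
Proof. by rewrite clmap_bigcup; apply: cl_closed. Qed.

Lemma cl_clmap F X : cl (F X) = F X.
Proof. exact: closed_clE (clmap_closed F X). Qed.

Lemma clmap_mono F X Y : X `<=` Y -> F X `<=` F Y.
Proof.
move=> XY; rewrite (clmap_bigcup F X) (clmap_bigcup F Y).
by apply: cl_mono => p [q /XY Yq Fp]; exists q.
Qed.

Lemma clmap_set0 F : F set0 = cl set0.
Proof. by rewrite clmap_bigcup bigcup_set0. Qed.

Lemma clmap_setU F X Y : F (X `|` Y) = cl (F X `|` F Y).
Proof.
apply/seteqP; split.
  rewrite clmap_bigcup; apply: cl_mono => p [q [Xq|Yq] Fp]; [left|right];
  by apply: clmap_mono Fp => _ ->.
by apply: cl_sub_closed (clmap_closed _ _) _ => p [] /clmap_mono; apply.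
Qed.

Lemma clmap_bigcupE F (I : Type) (Q : set I) (Y : I -> set P) :
  F (\bigcup_(i in Q) Y i) = cl (\bigcup_(i in Q) F (Y i)).
Proof.
rewrite clmap_bigcup; apply: cl_eq => p.
  move=> [q [i Qi Yq] Fp]; apply: sub_cl; exists i => //.
  by rewrite clmap_bigcup; apply: sub_cl; exists q.
move=> [i Qi]; rewrite clmap_bigcup; apply: cl_mono => r [q Yq Fr].
by exists q => //; exists i.
Qed.

Lemma cl_setUr X Y : cl (X `|` cl Y) = cl (X `|` Y).
Proof.
apply: cl_eq => p; last by case=> ?; apply: sub_cl; [left | right; apply: sub_cl].
by case=> [Xp|]; [apply: sub_cl; left | apply: cl_mono => q; right].
Qed.

Lemma cl_setUl X Y : cl (cl X `|` Y) = cl (X `|` Y).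
Proof. by rewrite setUC cl_setUr setUC. Qed.

Program Definition clmap0 : clmap := @Clmap (fun _ => cl set0) _ _.
Next Obligation. by apply: cl_eq => // p [q _]. Qed.

Program Definition clmap1 : clmap := @Clmap (@cl K1 K2) _ _.
Next Obligation.
apply: cl_eq => p; first by move=> Xp; apply: sub_cl; exists p => //; apply: sub_cl.
by move=> [q Xq]; apply: cl_mono => _ ->.
Qed.
Next Obligation. exact: cl_id. Qed.

Program Definition clmap_add F G : clmap := @Clmap (fun X => cl (F X `|` G X)) _ _.
Next Obligation.
apply: cl_eq => p.
  by case=> Fp; move: Fp; rewrite clmap_bigcup; apply: cl_mono => r [q Xq Fr];
    exists q => //; apply: sub_cl; [left | right].
move=> [q Xq]; apply: cl_mono => r [] Fr; [left | right];
by apply: clmap_mono Fr => _ ->.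
Qed.
Next Obligation. by rewrite !clmap_cl. Qed.

Program Definition clmap_mul F G : clmap := @Clmap (fun X => F (G X)) _ _.
Next Obligation. by rewrite {1}(clmap_bigcup G X) clmap_cl clmap_bigcupE. Qed.
Next Obligation. by rewrite clmap_cl. Qed.

Program Definition clmap_sup (A : set clmap) : clmap :=
  @Clmap (fun X => cl (\bigcup_(F in A) F X)) _ _.
Next Obligation.
apply: cl_eq => p.
  move=> [F AF]; rewrite clmap_bigcup; apply: cl_mono => r [q Xq Fr].
  by exists q => //; apply: sub_cl; exists F.
move=> [q Xq]; apply: cl_mono => r [F AF Fr]; exists F => //.
by apply: clmap_mono Fr => _ ->.
Qed.
Next Obligation. by congr (cl (bigcup _ _)); apply: funext => F; rewrite clmap_cl. Qed.

Lemma clmap_addA : associative clmap_add.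
Proof. by move=> F G H; apply: clmap_ext => X /=; rewrite cl_setUl cl_setUr setUA. Qed.

Lemma clmap_addC : commutative clmap_add.
Proof. by move=> F G; apply: clmap_ext => X /=; rewrite setUC. Qed.

Lemma clmap_add0 : left_id clmap0 clmap_add.
Proof. by move=> F; apply: clmap_ext => X /=; rewrite cl_setUl set0U cl_clmap. Qed.

Lemma clmap_mulA : associative clmap_mul.
Proof. by move=> F G H; apply: clmap_ext. Qed.

Lemma clmap_mul1 : left_id clmap1 clmap_mul.
Proof. by move=> F; apply: clmap_ext => X /=; rewrite cl_clmap. Qed.

Lemma clmap_mulr1 : right_id clmap1 clmap_mul.
Proof. by move=> F; apply: clmap_ext => X /=; rewrite clmap_cl. Qed.

Lemma clmap_mulDl : left_distributive clmap_mul clmap_add.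
Proof. by move=> F G H; apply: clmap_ext. Qed.

Lemma clmap_mulDr : right_distributive clmap_mul clmap_add.
Proof. by move=> F G H; apply: clmap_ext => X /=; rewrite clmap_cl clmap_setU. Qed.

Lemma clmap_mul0 : left_zero clmap0 clmap_mul.
Proof. by move=> F; apply: clmap_ext. Qed.

Lemma clmap_mulr0 : right_zero clmap0 clmap_mul.
Proof. by move=> F; apply: clmap_ext => X /=; rewrite clmap_cl clmap_set0. Qed.

End ClosedMaps.

HB.instance Definition _ (K1 K2 : pzSemiRingType) := gen_eqMixin (clmap K1 K2).
HB.instance Definition _ (K1 K2 : pzSemiRingType) := gen_choiceMixin (clmap K1 K2).
HB.instance Definition _ (K1 K2 : pzSemiRingType) :=
  GRing.isNmodule.Build (clmap K1 K2)
    (@clmap_addA K1 K2) (@clmap_addC K1 K2) (@clmap_add0 K1 K2).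
HB.instance Definition _ (K1 K2 : pzSemiRingType) :=
  GRing.Nmodule_isPzSemiRing.Build (clmap K1 K2)
    (@clmap_mulA K1 K2) (@clmap_mul1 K1 K2) (@clmap_mulr1 K1 K2)
    (@clmap_mulDl K1 K2) (@clmap_mulDr K1 K2) (@clmap_mul0 K1 K2) (@clmap_mulr0 K1 K2).

Section ClosedMapQuantale.
Variables K1 K2 : pzSemiRingType.
Implicit Types (F G : clmap K1 K2) (A B : set (clmap K1 K2)).

Lemma dle_clmap F G : dle F G <-> forall X, F X `<=` G X.
Proof.
split=> [<- X p Fp | FG]; first by apply: sub_cl; left.
by apply: clmap_ext => X /=; rewrite setUidr ?cl_clmap.
Qed.

Lemma is_sup_clmap A : is_sup A (clmap_sup A).
Proof.
split=> [F AF | G ubG]; apply/dle_clmap => X; first by move=> p Fp; apply: sub_cl; exists F.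
by apply: cl_sub_closed (clmap_closed _ _) _ => p [F /ubG /dle_clmap]; apply.
Qed.

Lemma is_sup_clmapE A G : is_sup A G -> G = clmap_sup A.
Proof.
move=> [ubG leG]; have [ubS leS] := is_sup_clmap A.
by apply: dle_anti; [apply: leG | apply: leS].
Qed.

Lemma clmap_supM A B : clmap_sup A * clmap_sup B = clmap_sup (setmul A B).
Proof.
apply: clmap_ext => X /=; apply: cl_eq => p.
  move=> [F AF]; rewrite clmap_cl clmap_bigcupE; apply: cl_mono => r [G BG FGr].
  by exists (F * G) => //; exists F, G.
move=> [_ [F [G [AF BG ->]]] /= FGp]; apply: sub_cl; exists F => //.
by rewrite clmap_cl; apply: clmap_mono FGp => r Gr; exists G.
Qed.

Lemma clmap_Rdioid : Rdioid (clmap K1 K2).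
Proof.
split=> [F | A _ | A B sA sB _ _ /is_sup_clmapE-> /is_sup_clmapE->].
- by apply: clmap_ext => X /=; rewrite setUid cl_clmap.
- by exists (clmap_sup A); apply: is_sup_clmap.
- by rewrite clmap_supM; apply: is_sup_clmap.
Qed.

End ClosedMapQuantale.

Section Box.
Variables K1 K2 : pzSemiRingType.

Definition box (a : K1) (b : K2) : set (K1 * K2) :=
  [set p | [\/ p.1 = 0, p.2 = 0 | dle p.1 a /\ dle p.2 b]].

Lemma closed_box a b : closed (box a b).
Proof.
rewrite /box; split=> /= [x y x' y' | x x' y | x y y' | A s y rA sA | A s x rA sA].
- case=> [x0 | y0 | [xa yb]] xx' yy'.
  + by apply: Or31; apply: dlex0; rewrite -x0.
  + by apply: Or32; apply: dlex0; rewrite -y0.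
  + by apply: Or33; split; apply: dle_trans; eassumption.
- case=> [-> | y0 | [xa yb]] Cx'; [by rewrite add0r | exact: Or32 |].
  case: Cx' => [-> | y0 | [x'a _]]; [by rewrite addr0; apply: Or33 | exact: Or32 |].
  by apply: Or33; split=> //; apply: dle_add.
- case=> [x0 | -> | [xa yb]] Cy'; [exact: Or31 | by rewrite add0r |].
  case: Cy' => [x0 | -> | [_ y'b]]; [exact: Or31 | by rewrite addr0; apply: Or33 |].
  by apply: Or33; split=> //; apply: dle_add.
- move=> Ay; have [y0 | y0] := pselect (y = 0); first by apply: Or32.
  have [s0 | [yb sa]] : s = 0 \/ dle y b /\ dle s a.
    by apply: is_sup_eq0_or_dle sA _ => x /Ay [| // | [xa yb]]; [left | right].
  + exact: Or31.
  + exact: Or33.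
- move=> Ax; have [x0 | x0] := pselect (x = 0); first by apply: Or31.
  have [s0 | [xa sb]] : s = 0 \/ dle x a /\ dle s b.
    by apply: is_sup_eq0_or_dle sA _ => y /Ax [// | | [xa yb]]; [left | right].
  + exact: Or32.
  + exact: Or33.
Qed.

Lemma cl_pt_box (idem1 : idem_add K1) (idem2 : idem_add K2) a b :
  cl [set (a, b)] `<=` box a b.
Proof.
by apply: cl_sub_closed (closed_box a b) _ => _ ->; apply: Or33; split; [apply: idem1 | apply: idem2].
Qed.

End Box.

Section Action.
Variables K1 K2 : pzSemiRingType.
Hypotheses (R1 : Rdioid K1) (R2 : Rdioid K2).
Local Notation P := (K1 * K2)%type.
Implicit Types (a : K1) (b : K2) (X : set P).
Let idem1 : idem_add K1 := Rdioid_idem R1.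
Let idem2 : idem_add K2 := Rdioid_idem R2.

Definition scale a b X : set P := [set (a * q.1, b * q.2) | q in X].

Lemma scaleM a b a' b' X : scale a b (scale a' b' X) = scale (a * a') (b * b') X.
Proof. by rewrite /scale image_comp; congr image; apply: funext => q /=; rewrite !mulrA. Qed.

Lemma scale11 X : scale 1 1 X = X.
Proof. by apply: eq_image_id => -[x y] _ /=; rewrite !mul1r. Qed.

Lemma closed_scale_preimage a b C :
  closed C -> closed [set p | C (a * p.1, b * p.2)].
Proof.
move=> HC; split=> /= [x y x' y' Cxy xx' yy' | x x' y Cx Cx' | x y y' Cy Cy'
                      | A s y rA sA CA | A s x rA sA CA].
- by apply: (closed_down HC Cxy); apply: dle_mull.
- by rewrite mulrDr; apply: closed_add1.
- by rewrite mulrDr; apply: closed_add2.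
- apply: (closed_sup1 HC (regular_setmul (regular1 a) rA) (is_sup_mull R1 a rA sA)).
  by move=> _ [_ [x [-> Ax ->]]]; apply: CA.
- apply: (closed_sup2 HC (regular_setmul (regular1 b) rA) (is_sup_mull R2 b rA sA)).
  by move=> _ [_ [y [-> Ay ->]]]; apply: CA.
Qed.

Lemma cl_scale_cl a b X : cl (scale a b (cl X)) = cl (scale a b X).
Proof.
apply: cl_eq => _ [q Xq <-]; last by apply: sub_cl; exists q => //; apply: sub_cl.
move: q Xq; apply: cl_sub_closed (closed_scale_preimage a b (cl_closed _)) _.
by move=> q Xq; apply: sub_cl; exists q.
Qed.

Lemma scale_sub_cl a b a' b' X :
  dle a a' -> dle b b' -> scale a b X `<=` cl (scale a' b' X).
Proof.
move=> aa' bb' _ [q Xq <-].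
apply: (closed_down (cl_closed _) (x := a' * q.1) (y := b' * q.2)).
- by apply: sub_cl; exists q.
- exact: dle_mulr.
- exact: dle_mulr.
Qed.

Program Definition act a b : clmap K1 K2 := @Clmap _ _ (fun X => cl (scale a b X)) _ _.
Next Obligation.
apply: cl_eq => [_ [q Xq <-] | p [q Xq]].
  by apply: sub_cl; exists q => //; apply: sub_cl; exists q.
by apply: cl_mono => _ [_ -> <-]; exists q.
Qed.
Next Obligation. exact: cl_scale_cl. Qed.

Lemma actM a b a' b' : act a b * act a' b' = act (a * a') (b * b').
Proof. by apply: clmap_ext => X /=; rewrite cl_scale_cl scaleM. Qed.

Lemma act11 : act 1 1 = 1.
Proof. by apply: clmap_ext => X /=; rewrite scale11. Qed.

Lemma act0x b : act 0 b = 0.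
Proof.
apply: clmap_ext => X /=; apply: cl_eq => // _ [q _ <-].
by rewrite mul0r; apply: cl_0x.
Qed.

Lemma actx0 a : act a 0 = 0.
Proof.
apply: clmap_ext => X /=; apply: cl_eq => // _ [q _ <-].
by rewrite mul0r; apply: cl_x0.
Qed.

Lemma actDl a a' b : act (a + a') b = act a b + act a' b.
Proof.
apply: clmap_ext => X /=; rewrite cl_setUl cl_setUr; apply: cl_eq => p.
  move=> [q Xq <-]; rewrite mulrDl.
  by apply: (closed_add1 (cl_closed _)); apply: sub_cl; [left | right]; exists q.
case=> Sp; apply: (scale_sub_cl _ (idem2 b) Sp);
by [apply: dle_addl idem1 _ _ | apply: dle_addr idem1 _ _].
Qed.

Lemma actDr a b b' : act a (b + b') = act a b + act a b'.
Proof.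
apply: clmap_ext => X /=; rewrite cl_setUl cl_setUr; apply: cl_eq => p.
  move=> [q Xq <-]; rewrite mulrDl.
  by apply: (closed_add2 (cl_closed _)); apply: sub_cl; [left | right]; exists q.
case=> Sp; apply: (scale_sub_cl (idem1 a) _ Sp);
by [apply: dle_addl idem2 _ _ | apply: dle_addr idem2 _ _].
Qed.

Lemma act_sup1 (A : set K1) s b : regular A -> is_sup A s ->
  act s b = clmap_sup (setimg (act^~ b) A).
Proof.
move=> rA sA; apply: clmap_ext => X /=; apply: cl_eq => p.
  move=> [q Xq <-]; have sAq := is_sup_mulr R1 q.1 rA sA.
  apply: (closed_sup1 (cl_closed _) (regular_setmul rA (regular1 q.1)) sAq).
  move=> _ [x [_ [Ax -> ->]]]; apply: sub_cl; exists (act x b); first by exists x.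
  by apply: sub_cl; exists q.
by move=> [_ [x Ax ->]]; apply: cl_sub; apply: scale_sub_cl (sA.1 x Ax) (idem2 b).
Qed.

Lemma act_sup2 (A : set K2) a s : regular A -> is_sup A s ->
  act a s = clmap_sup (setimg (act a) A).
Proof.
move=> rA sA; apply: clmap_ext => X /=; apply: cl_eq => p.
  move=> [q Xq <-]; have sAq := is_sup_mulr R2 q.2 rA sA.
  apply: (closed_sup2 (cl_closed _) (regular_setmul rA (regular1 q.2)) sAq).
  move=> _ [y [_ [Ay -> ->]]]; apply: sub_cl; exists (act a y); first by exists y.
  by apply: sub_cl; exists q.
by move=> [_ [y Ay ->]]; apply: cl_sub; apply: scale_sub_cl (idem1 a) (sA.1 y Ay).
Qed.

Lemma act1_Rmorph : Rmorph (act^~ 1).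
Proof.
split=> [|A s rA sA]; last by rewrite (act_sup1 _ rA sA); apply: is_sup_clmap.
split=> [||x y|x y]; [exact: act0x | exact: act11 | exact: actDl | by rewrite actM mulr1].
Qed.

Lemma act2_Rmorph : Rmorph (act 1).
Proof.
split=> [|A s rA sA]; last by rewrite (act_sup2 _ rA sA); apply: is_sup_clmap.
split=> [||x y|x y]; [exact: actx0 | exact: act11 | exact: actDr | by rewrite actM mulr1].
Qed.

Lemma act_commute : commuting_images (act^~ 1) (act 1).
Proof. by move=> a b; rewrite !actM !mulr1 !mul1r. Qed.

Lemma act_pt a b : act a b [set (1, 1)] = cl [set (a, b)].
Proof. by rewrite /= /scale image_set1 /= !mulr1. Qed.

Lemma dle_act a b a' b' :
  dle (act a b) (act a' b') -> [\/ a = 0, b = 0 | dle a a' /\ dle b b'].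
Proof.
move=> /dle_clmap /(_ [set (1, 1)]); rewrite !act_pt => cl_ab.
have ab : cl [set (a, b)] (a, b) by apply: sub_cl.
exact: (cl_pt_box idem1 idem2 (cl_ab _ ab)).
Qed.

End Action.

Theorem corollary1 (K1 K2 T : pzSemiRingType) (t1 : K1 -> T) (t2 : K2 -> T) :
  Rdioid K1 -> Rdioid K2 -> (0 : K1) <> 1 -> (0 : K2) <> 1 ->
  is_Rtensor t1 t2 ->
  forall (a a' : K1) (b b' : K2),
    (t1 a * t2 b = 0 -> a = 0 \/ b = 0) /\
    (t1 a * t2 b <> 0 -> dle (t1 a * t2 b) (t1 a' * t2 b') ->
       (a <> 0 /\ dle a a') /\ (b <> 0 /\ dle b b')).
Proof.
move=> R1 R2 _ _ [_ [[t10 _ _ _] _] [[t20 _ _ _] _] _ univ] a a' b b'.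
have [h [[[h0 _ hD hM] _] h1 h2 _]] := univ _ _ _ (clmap_Rdioid K1 K2)
  (act1_Rmorph R1 R2) (act2_Rmorph R1 R2) (act_commute R1 R2).
have hE x y : h (t1 x * t2 y) = act R1 R2 x y by rewrite hM h1 h2 actM mulr1 mul1r.
split=> [ab0 | ab_neq0 ab_le].
  have : dle (act R1 R2 a b) (act R1 R2 0 0) by rewrite -hE ab0 h0; apply: dle0x.
  by case/dle_act=> [a0 | b0 | [/dlex0 a0 _]]; [left | right | left].
have a0 : a <> 0 by move=> a0; apply: ab_neq0; rewrite a0 t10 mul0r.
have b0 : b <> 0 by move=> b0; apply: ab_neq0; rewrite b0 t20 mulr0.
have : dle (act R1 R2 a b) (act R1 R2 a' b') by rewrite /dle -!hE -hD ab_le.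
by case/dle_act=> [// | // | [aa' bb']].
Qed.
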